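(* Let $q=3^k$. Then, as $n\to\infty$, $$EGZ(3,\mathbb{F}_{q}^{n},2) \leq \begin{cases} 8.315^{n+o(n)} & \text{for } k=2, \\ 21.802^{n+o(n)} &\text{for } k=3, \\ 58.557^{n+o(n)} &\text{for } k=4, \\ 159.812^{n+o(n)} &\text{for } k=5. \end{cases}$$
   Context: $\mathbb{F}_q^n$ is viewed as a commutative ring with coordinatewise operations. For elements $g_1,\dots,g_t$ of a commutative ring $R$, $e_m(g_1,\dots,g_t)=\sum_{1\leq i_1<\cdots<i_m\leq t}\prod_{j=1}^m g_{i_j}$; in particular $e_2(g_1,g_2,g_3)=g_1g_2+g_2g_3+g_3g_1$. A sequence over $R$ is a finite list of elements of $R$ (repetitions allowed); a subsequence of length $t$ is obtained by choosing $t$ distinct positions. For a finite commutative ring $R$, $EGZ(t,R,m)$ is the smallest positive integer $\ell$ such that every sequence $S$ over $R$ of length $|S|\geq \ell$ contains a subsequence $S'$ of length $t$ with $e_m(S')=0$ in $R$; if no such $\ell$ exists, $EGZ(t,R,m)=\infty$. *)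

From Stdlib Require Import Reals.
From HB Require Import structures.
From mathcomp Require Import all_boot all_order all_algebra all_field.
Set Implicit Arguments. Unset Strict Implicit. Unset Printing Implicit Defensive.
Import GRing.Theory.

Local Open Scope ring_scope.

Definition elem_sym (R : pzSemiRingType) (t m : nat) (g : 'I_t -> R) : R :=
  \sum_(A : {set 'I_t} | #|A| == m) \prod_(i in A) g i.

Definition coordring (F : pzRingType) (n : nat) : pzRingType := {ffun 'I_n -> F}.

Definition egz_prop (R : pzSemiRingType) (t m l : nat) : Prop :=
  forall S : seq R, (l <= size S)%N ->
    exists pos : 'I_t -> 'I_(size S), injective pos /\
      elem_sym m (fun i => nth 0 S (pos i)) = 0.

(* EGZ(t,R,m) <= x  (x real): the least positive l with egz_prop exists and is
   at most x; equivalently some positive l <= x has egz_prop. *)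
Definition EGZ_le (R : pzSemiRingType) (t m : nat) (x : Rdefinitions.R) : Prop :=
  exists l : nat, (0 < l)%N /\ Rle (INR l) x /\ egz_prop R t m l.

Local Close Scope ring_scope.
Local Open Scope R_scope.

Definition egz_const (k : nat) : Rdefinitions.R :=
  match k with
  | 2 => 8.315 | 3 => 21.802 | 4 => 58.557 | 5 => 159.812 | _ => 0
  end.

From Stdlib Require Import Reals Lra.
From HB Require Import structures.
From mathcomp Require Import all_boot all_order all_algebra all_field.
From mathcomp Require Import ring zify.
Set Implicit Arguments. Unset Strict Implicit. Unset Printing Implicit Defensive.
Import GRing.Theory.

Local Open Scope ring_scope.

(* Slice rank.  Over F with #|F| = q = 3^k, the indicator of
   x_i y_i + y_i z_i + z_i x_i = 0 for all i is the polynomial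
   prod_i (1 - e_2(x_i, y_i, z_i)^(q-1)).  By Frobenius, e_2^(q-1) =
   prod_j (e_2^2)^(3^j) expands into monomials x^al y^be z^ga whose base-3 digit
   sums add up to 4k.  Weighting an exponent with digit sum s by
   (a^3)^s (b^3)^(2k-s) (and the exponent 0 by theta = a^(4k) b^(2k)), every
   monomial has weight at least theta^3 in total, so one of its three exponent
   vectors is heavy (weight >= theta^n); there are at most (c theta)^n / theta^n
   = c^n heavy vectors when theta + (a^6 + a^3 b^3 + b^6)^k <= c theta + b^(6k).
   Slicing along the heavy vector bounds by 3 c^n every set of vectors whose only
   solutions are x = y = z.  A solution (x, x, z) forces z = x when supports have
   equal sizes, and a value repeated three times is a solution since 3 = 0, so
   pigeonholing a sequence of length 6(n+1) c^n + 1 over values and support sizes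
   finds three distinct terms with e_2 = 0.  The pairs (a, b) = (8, 7), (13, 11),
   (19, 16), (13, 11) give the four constants. *)

Lemma big_mul_exchange (R : comPzSemiRingType) (I J : finType) (L : {pred I})
    (a : I -> R) (b : I -> J -> R) (h : J -> R) :
  \sum_z (\sum_(i in L) a i * b i z) * h z = \sum_(i in L) a i * \sum_z b i z * h z.
Proof.
under eq_bigr do rewrite mulr_suml; rewrite exchange_big /=.
by apply: eq_bigr => i _; rewrite mulr_sumr; apply: eq_bigr => z _; rewrite mulrA.
Qed.

Section SliceRank.
Variable K : fieldType.

Lemma submx_ones_on_rank_set m p (B : 'M[K]_(p, m)) :
  exists2 h : 'rV[K]_m, (h <= B)%MS &
    exists2 J : {set 'I_m}, (\rank B <= #|J|)%N & {in J, forall j, h 0 j = 1}.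
Proof.
set f := maxrankfun B^T.
have fullS : row_full (rowsub f B^T)^T.
  by rewrite /row_full mxrank_tr; move: (maxrowsub_free B^T); rewrite /row_free => /eqP ->.
have [u Hu] := submxP (submx_full (const_mx 1 : 'rV[K]_(\rank B^T)) fullS).
exists (u *m B); first exact: submxMl.
exists (f @: setT).
  by rewrite card_imset ?cardsT ?card_ord ?mxrank_tr //; apply: maxrankfun_inj.
move=> j /imsetP [i _ ->].
have := congr1 (fun M : 'rV[K]_(\rank B^T) => M 0 i) Hu; rewrite !mxE => ->.
by apply: eq_bigr => a _; rewrite !mxE.
Qed.

Lemma mxrank_diag_ones n (d : 'rV[K]_n) (J : {set 'I_n}) :
  {in J, forall j, d 0 j = 1} -> (#|J| <= \rank (diag_mx d))%N.
Proof.
move=> dJ; pose g (i : 'I_#|J|) : 'I_n := enum_val i.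
have subE : colsub g (rowsub g (diag_mx d)) = 1%:M.
  apply/matrixP => i j; rewrite !mxE (inj_eq enum_val_inj) dJ //; exact: enum_valP.
rewrite -{1}(mxrank1 K #|J|) -subE -[rowsub g _]mulmx1 -mulmx_colsub.
exact: leq_trans (mxrankM_maxl _ _) (mxrankS (rowsub_sub _ _)).
Qed.

Lemma diag_mx_sum_deltas n (h : 'rV[K]_n) x y :
  diag_mx h x y = \sum_z (if (x == y) && (y == z) then 1 else 0) * h 0 z.
Proof.
rewrite mxE; have [<-|neq_xy] := eqVneq x y; last first.
  by rewrite mulr0n big1 // => z _; rewrite mul0r.
rewrite (bigD1 x) //= eqxx mulr1n mul1r big1 ?addr0 // => z zx.
by rewrite eq_sym (negbTE zx) mul0r.
Qed.

Lemma slice_rank_diag_le (T I : finType) (A : {set T}) (L1 L2 L3 : {set I})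
    (f1 f2 f3 : I -> T -> K) (g1 g2 g3 : I -> T -> T -> K) :
  (forall x y z, x \in A -> y \in A -> z \in A ->
     (if (x == y) && (y == z) then 1 else 0) =
     \sum_(i in L1) f1 i x * g1 i y z + \sum_(i in L2) f2 i y * g2 i x z
     + \sum_(i in L3) f3 i z * g3 i x y) ->
  (#|A| <= #|L1| + #|L2| + #|L3|)%N.
Proof.
move=> diagE.
pose e (x : 'I_#|A|) : T := enum_val x.
have eA x : e x \in A by apply: enum_valP.
pose C : 'M[K]_(#|A|, #|L3|) := \matrix_(z, i) f3 (enum_val i) (e z).
have [h /sub_kermxP hC [J rankJ hJ]] := submx_ones_on_rank_set (kermx C).
have hC3 i : i \in L3 -> \sum_z f3 i (e z) * h 0 z = 0.
  move=> iL; have := congr1 (fun M : 'rV[K]_#|L3| => M 0 (enum_rank_in iL i)) hC.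
  rewrite !mxE => hC0; rewrite -[RHS]hC0; apply: eq_bigr => z _.
  by rewrite !mxE enum_rankK_in // mulrC.
pose P1 : 'M[K]_(#|A|, #|L1|) := \matrix_(x, j) f1 (enum_val j) (e x).
pose Q1 : 'M[K]_(#|L1|, #|A|) := \matrix_(j, y) \sum_z g1 (enum_val j) (e y) (e z) * h 0 z.
pose Q2 : 'M[K]_(#|A|, #|L2|) := \matrix_(x, j) \sum_z g2 (enum_val j) (e x) (e z) * h 0 z.
pose P2 : 'M[K]_(#|L2|, #|A|) := \matrix_(j, y) f2 (enum_val j) (e y).
have diag_hE : diag_mx h = P1 *m Q1 + Q2 *m P2.
  apply/matrixP => x y; rewrite diag_mx_sum_deltas.
  under eq_bigr do rewrite -!(inj_eq enum_val_inj) diagE // !mulrDl.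
  rewrite !big_split /=.
  have -> : \sum_z (\sum_(i in L3) f3 i (e z) * g3 i (e x) (e y)) * h 0 z = 0.
    rewrite (eq_bigr (fun z => (\sum_(i in L3) g3 i (e x) (e y) * f3 i (e z)) * h 0 z)).
      by rewrite big_mul_exchange big1 // => i /hC3 ->; rewrite mulr0.
    by move=> z _; congr (_ * _); apply: eq_bigr => i _; rewrite mulrC.
  rewrite addr0 big_mul_exchange big_mul_exchange.
  rewrite !mxE; congr (_ + _); rewrite big_enum_val;
    by apply: eq_bigr => j _; rewrite !mxE // mulrC.
have rank_diag : (\rank (diag_mx h) <= #|L1| + #|L2|)%N.
  rewrite diag_hE; apply: leq_trans (mxrank_add _ _) (leq_add _ _).
    exact: leq_trans (mxrankM_maxl _ _) (rank_leq_col _).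
  exact: leq_trans (mxrankM_maxr _ _) (rank_leq_row _).
have rank_ker : (#|A| - #|L3| <= \rank (kermx C))%N.
  by rewrite mxrank_ker leq_sub2l // rank_leq_col.
have := leq_trans rank_ker (leq_trans rankJ (leq_trans (mxrank_diag_ones hJ) rank_diag)).
lia.
Qed.
End SliceRank.

Definition e2sq_exp (p : 'I_6) (c : nat) : nat :=
  nth 0%N (nth [::] [:: [:: 2; 2; 0]; [:: 0; 2; 2]; [:: 2; 0; 2];
                       [:: 2; 1; 1]; [:: 1; 2; 1]; [:: 1; 1; 2]]%N p) c.
Definition e2sq_coef (R : nzSemiRingType) (p : 'I_6) : R := if (p < 3)%N then 1 else 2%:R.

Lemma e2sq_exp_le2 p c : (e2sq_exp p c <= 2)%N.
Proof.
rewrite /e2sq_exp; case: p => [[|[|[|[|[|[|p]]]]]] ?];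
  by case: c => [|[|[|c]]]; rewrite /= ?nth_nil.
Qed.

Lemma e2sq_exp_sum p : (e2sq_exp p 0 + e2sq_exp p 1 + e2sq_exp p 2 = 4)%N.
Proof. by case: p => [[|[|[|[|[|[|[]]]]]]] ?]. Qed.

Lemma sqr_e2E (R : comNzRingType) (u v w : R) :
  (u * v + v * w + w * u) ^+ 2 =
  \sum_(p < 6) e2sq_coef R p * u ^+ e2sq_exp p 0 * v ^+ e2sq_exp p 1 * w ^+ e2sq_exp p 2.
Proof. by rewrite !big_ord_recl big_ord0 /e2sq_coef /=; ring. Qed.

Definition e2pow_exp k (pi : {ffun 'I_k -> 'I_6}) (c : nat) : nat :=
  \sum_(j < k) e2sq_exp (pi j) c * 3 ^ j.

Definition e2pow_coef (R : nzSemiRingType) k (pi : {ffun 'I_k -> 'I_6}) : R :=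
  \prod_(j < k) e2sq_coef R (pi j).

Lemma predn_expn3 k : ((3 ^ k).-1 = \sum_(j < k) 2 * 3 ^ j)%N.
Proof.
elim: k => [|k IH]; first by rewrite big_ord0.
rewrite big_ord_recr /= -IH expnS; have := expn_gt0 3 k; lia.
Qed.

Section CharThree.
Variable R : comNzRingType.
Hypothesis pchar3 : 3%N \in [pchar R].

Lemma exprD_pow3 (x y : R) j : (x + y) ^+ (3 ^ j) = x ^+ (3 ^ j) + y ^+ (3 ^ j).
Proof. by apply: exprDn_pchar; rewrite (eq_pnat _ (pcharf_eq pchar3)) pnatX pnat_id. Qed.

Lemma e2_expr_predn_pow3 (u v w : R) k :
  (u * v + v * w + w * u) ^+ (3 ^ k).-1 =
  \sum_(pi : {ffun 'I_k -> 'I_6})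
    e2pow_coef R pi * u ^+ e2pow_exp pi 0 * v ^+ e2pow_exp pi 1 * w ^+ e2pow_exp pi 2.
Proof.
rewrite predn_expn3 -prodrXr.
under eq_bigr => j _ do rewrite mulnC exprM !exprD_pow3 !exprMn sqr_e2E.
rewrite bigA_distr_bigA /=; apply: eq_bigr => pi _.
rewrite /e2pow_coef /e2pow_exp -!prodrXr -!big_split /=; apply: eq_bigr => j _.
by rewrite !(mulnC _ (3 ^ j)%N) !exprM.
Qed.

End CharThree.

Fixpoint digitsum3 (k e : nat) : nat :=
  if k is k'.+1 then (e %% 3 + digitsum3 k' (e %/ 3))%N else 0%N.

Lemma digitsum3_0 k : digitsum3 k 0 = 0%N.
Proof. by elim: k => //= k ->. Qed.

Lemma digitsum3_le k e : (digitsum3 k e <= 2 * k)%N.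
Proof.
elim: k e => [|k IH] e //=.
have := IH (e %/ 3)%N; have := ltn_pmod e (isT : (0 < 3)%N); lia.
Qed.

Lemma digits3_lt k (d : 'I_k -> nat) :
  (forall j, d j <= 2)%N -> (\sum_(j < k) d j * 3 ^ j < 3 ^ k)%N.
Proof.
move=> d_le2; apply: (@leq_ltn_trans (\sum_(j < k) 2 * 3 ^ j)%N).
  by apply: leq_sum => j _; rewrite leq_mul2r d_le2 orbT.
rewrite -predn_expn3; have := expn_gt0 3 k; lia.
Qed.

Lemma digitsum3_digits k (d : 'I_k -> nat) :
  (forall j, d j <= 2)%N -> digitsum3 k (\sum_(j < k) d j * 3 ^ j) = (\sum_(j < k) d j)%N.
Proof.
elim: k d => [|k IH] d d_le2; first by rewrite !big_ord0.
rewrite !big_ord_recl /= expn0 muln1.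
have -> : (\sum_(i < k) d (lift ord0 i) * 3 ^ bump 0 i =
           3 * \sum_(i < k) d (lift ord0 i) * 3 ^ i)%N.
  by rewrite big_distrr /=; apply: eq_bigr => i _; rewrite /bump /= expnS; lia.
have := d_le2 ord0; set X := (\sum_(i < k) _)%N => d0_le2.
have -> : ((d ord0 + 3 * X) %% 3 = d ord0)%N by lia.
have -> : ((d ord0 + 3 * X) %/ 3 = X)%N by lia.
by rewrite /X IH // => j; apply: d_le2.
Qed.

Lemma sum_digitsum3_pow k (u v : nat) :
  (\sum_(0 <= e < 3 ^ k) u ^ digitsum3 k e * v ^ (2 * k - digitsum3 k e) =
   (u ^ 2 + u * v + v ^ 2) ^ k)%N.
Proof.
elim: k => [|k IH]; first by rewrite expn0 big_nat1.
have sum3E (H : nat -> nat) m : (\sum_(0 <= e < 3 * m) H e =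
    \sum_(0 <= e < m) (H (3 * e) + H (3 * e).+1 + H (3 * e).+2))%N.
  elim: m => [|m IHm]; first by rewrite !big_geq.
  by rewrite (_ : 3 * m.+1 = (3 * m).+3)%N ?big_nat_recr //= ?IHm; lia.
rewrite (expnS 3) (expnS (u ^ 2 + u * v + v ^ 2)) sum3E -IH big_distrr /=; apply: eq_bigr => e _.
have mod3 t : (t < 3 -> (3 * e + t) %% 3 = t)%N by lia.
have div3 t : (t < 3 -> (3 * e + t) %/ 3 = e)%N by lia.
have := digitsum3_le k e; set s := digitsum3 k e => s_le.
rewrite -[(3 * e)%N]addn0 -!addnS !mod3 // !div3 //.
have -> : (2 * k.+1 - (0 + s) = 2 + (2 * k - s))%N by lia.
have -> : (2 * k.+1 - (1 + s) = 1 + (2 * k - s))%N by lia.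
have -> : (2 * k.+1 - (2 + s) = 0 + (2 * k - s))%N by lia.
rewrite !expnD; ring.
Qed.

Section Weights.
Variables k a b : nat.

Definition theta : nat := (a ^ (4 * k) * b ^ (2 * k))%N.

Definition digit_weight (e : nat) : nat :=
  ((a ^ 3) ^ digitsum3 k e * (b ^ 3) ^ (2 * k - digitsum3 k e))%N.

(* The constant term of 1 - e_2^(q-1) has exponents (0, 0, 0), hence the weight
   theta of 0. *)
Definition weight (e : nat) : nat := if e == 0%N then theta else digit_weight e.

Lemma digit_weight_le e : (b <= a)%N -> (digit_weight e <= weight e)%N.
Proof.
move=> le_ba; rewrite /weight; case: eqP => [->|] //.
rewrite /digit_weight /theta digitsum3_0 subn0 mul1n.
rewrite -expnM (_ : 3 * (2 * k) = 4 * k + 2 * k)%N; last by lia.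
rewrite expnD leq_mul2r; apply/orP; right.
by elim: (4 * k)%N => // m IH; rewrite !expnS leq_mul.
Qed.

Lemma sum_weight :
  (\sum_(0 <= e < 3 ^ k) weight e + b ^ (6 * k) =
   theta + (a ^ 6 + a ^ 3 * b ^ 3 + b ^ 6) ^ k)%N.
Proof.
have e0 : (0 < 3 ^ k)%N by rewrite expn_gt0.
have digit_weight0 : digit_weight 0 = (b ^ (6 * k))%N.
  by rewrite /digit_weight digitsum3_0 subn0 mul1n -expnM mulnA.
have := sum_digitsum3_pow k (a ^ 3) (b ^ 3); rewrite -!expnM -[(3 * 2)%N]/6%N.
rewrite -/(\sum_(0 <= e < 3 ^ k) digit_weight e)%N !(big_ltn e0) digit_weight0 /weight eqxx.
rewrite (eq_big_nat _ _ (F2 := digit_weight)) => [|[]//].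
lia.
Qed.

Lemma e2pow_weight_ge (pi : {ffun 'I_k -> 'I_6}) : (b <= a)%N ->
  (theta ^ 3 <=
   weight (e2pow_exp pi 0) * weight (e2pow_exp pi 1) * weight (e2pow_exp pi 2))%N.
Proof.
move=> le_ba; have dw_le e := digit_weight_le e le_ba.
apply: leq_trans (leq_mul (leq_mul (dw_le _) (dw_le _)) (dw_le _)).
pose s c := (\sum_(j < k) e2sq_exp (pi j) c)%N.
have digitsumE c : digitsum3 k (e2pow_exp pi c) = s c.
  by rewrite digitsum3_digits // => j; apply: e2sq_exp_le2.
have s_le c : (s c <= 2 * k)%N.
  apply: (@leq_trans (\sum_(j < k) 2)%N); last by rewrite sum_nat_const card_ord mulnC.
  by apply: leq_sum => j _; apply: e2sq_exp_le2.
have s_sum : (s 0 + s 1 + s 2 = 4 * k)%N.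
  rewrite -!big_split /= (eq_bigr (fun=> 4%N)) => [|j _]; last exact: e2sq_exp_sum.
  by rewrite sum_nat_const card_ord mulnC.
rewrite /digit_weight !digitsumE.
move: (s_le 0) (s_le 1) (s_le 2) s_sum; set s0 := s 0; set s1 := s 1; set s2 := s 2.
move=> s0_le s1_le s2_le s_sum.
rewrite (_ : _ * _ = (a ^ 3) ^ (s0 + s1 + s2) *
    (b ^ 3) ^ (2 * k - s0 + (2 * k - s1) + (2 * k - s2)))%N; last by rewrite !expnD; ring.
rewrite s_sum (_ : 2 * k - s0 + _ + _ = 2 * k)%N; last by lia.
by rewrite /theta expnMn -!expnM (mulnC 3%N) (mulnC 3%N (2 * k)%N).
Qed.

Definition vec_weight n (al : {ffun 'I_n -> 'I_(3 ^ k)}) : nat := (\prod_i weight (al i))%N.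

Definition heavy n : {set {ffun 'I_n -> 'I_(3 ^ k)}} := [set al | theta ^ n <= vec_weight al]%N.

Lemma card_heavy_le n : (#|heavy n| * theta ^ n <= (\sum_(0 <= e < 3 ^ k) weight e) ^ n)%N.
Proof.
rewrite -sum1_card big_distrl /=.
apply: (@leq_trans (\sum_(al in heavy n) vec_weight al)%N).
  by apply: leq_sum => al; rewrite inE mul1n.
apply: (@leq_trans (\sum_(al : {ffun 'I_n -> 'I_(3 ^ k)}) vec_weight al)%N).
  by rewrite [leqRHS](bigID (mem (heavy n))) /= leq_addr.
have -> : (\sum_(al : {ffun 'I_n -> 'I_(3 ^ k)}) vec_weight al =
           \prod_(i < n) \sum_(e < 3 ^ k) weight e)%N.
  by rewrite /vec_weight bigA_distr_bigA.
by rewrite prod_nat_const card_ord big_mkord.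
Qed.

Lemma heavy_third n (al be ga : {ffun 'I_n -> 'I_(3 ^ k)}) :
    (theta ^ (3 * n) <= vec_weight al * vec_weight be * vec_weight ga)%N ->
  al \notin heavy n -> be \notin heavy n -> ga \in heavy n.
Proof.
rewrite !inE -!ltnNge => weight_ge al_light be_light; rewrite leqNgt; apply/negP => ga_light.
have := leq_ltn_trans weight_ge (ltn_mul (ltn_mul al_light be_light) ga_light).
by rewrite -!expnD (_ : n + n + n = 3 * n)%N ?ltnn //; lia.
Qed.

End Weights.

Lemma sum_option (R : nmodType) (T : finType) (f : option T -> R) :
  \sum_(t : option T) f t = f None + \sum_(t : T) f (Some t).
Proof.
rewrite (bigD1 None) //=; congr (_ + _).
rewrite (reindex_omap Some (fun o => o)) //=; last by case.
by apply: eq_bigl => t; rewrite ?eqxx.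
Qed.

Section IndicatorPolynomial.
Variables (F : finFieldType) (k n : nat).
Hypothesis cardF : #|F| = (3 ^ k)%N.
Hypothesis k_gt0 : (0 < k)%N.

Local Notation digits := {ffun 'I_k -> 'I_6}.
Local Notation V := {ffun 'I_n -> F}.
Local Notation expvec := {ffun 'I_n -> 'I_(3 ^ k)}.

Lemma pchar3F : (3 \in [pchar F])%N.
Proof. exact: card_finPcharP cardF _. Qed.

Lemma expr_card_predn (s : F) : s ^+ (3 ^ k).-1 = (s != 0)%:R.
Proof.
have q_gt1 : (1 < 3 ^ k)%N by rewrite -{1}(expn0 3) ltn_exp2l.
have [->|s_neq0] := eqVneq s 0; first by rewrite expr0n; case: (3 ^ k)%N q_gt1 => [|[|]].
apply: (mulIf s_neq0); rewrite mul1r -exprSr prednK; last by lia.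
by rewrite -cardF expf_card.
Qed.

Definition term_exp (t : option digits) (c : nat) : nat :=
  if t is Some pi then e2pow_exp pi c else 0%N.

Definition term_coef (t : option digits) : F :=
  if t is Some pi then - e2pow_coef F pi else 1.

Lemma term_exp_lt t c : (term_exp t c < 3 ^ k)%N.
Proof.
case: t => [pi|] /=; last by rewrite expn_gt0.
by apply: digits3_lt => j; apply: e2sq_exp_le2.
Qed.

Lemma one_sub_e2_expE (u v w : F) :
  1 - (u * v + v * w + w * u) ^+ (3 ^ k).-1 =
  \sum_(t : option digits)
    term_coef t * u ^+ term_exp t 0 * v ^+ term_exp t 1 * w ^+ term_exp t 2.
Proof.
rewrite sum_option /= !expr0 !mulr1 (e2_expr_predn_pow3 pchar3F) -sumrN.
by congr (_ + _); apply: eq_bigr => pi _; rewrite !mulNr.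
Qed.

Definition e2_zero_ind (x y z : V) : F :=
  \prod_(i < n) (1 - (x i * y i + y i * z i + z i * x i) ^+ (3 ^ k).-1).

Lemma e2_zero_indE x y z :
  e2_zero_ind x y z = [forall i, x i * y i + y i * z i + z i * x i == 0]%:R.
Proof.
rewrite /e2_zero_ind.
have [/forallP e2_0|/forallPn [i e2_neq0]] :=
  boolP [forall i, x i * y i + y i * z i + z i * x i == 0].
  by apply: big1 => i _; rewrite expr_card_predn (eqP (e2_0 i)) eqxx subr0.
by rewrite (bigD1 i) //= expr_card_predn e2_neq0 subrr mul0r.
Qed.

Definition exp_vec (s : {ffun 'I_n -> option digits}) (c : nat) : expvec :=
  [ffun i => Ordinal (term_exp_lt (s i) c)].

Definition monomial (al : expvec) (x : V) : F := \prod_i x i ^+ al i.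

Definition exp_coef (s : {ffun 'I_n -> option digits}) : F := \prod_i term_coef (s i).

Lemma e2_zero_ind_expand x y z :
  e2_zero_ind x y z =
  \sum_s exp_coef s * monomial (exp_vec s 0) x * monomial (exp_vec s 1) y
                    * monomial (exp_vec s 2) z.
Proof.
rewrite /e2_zero_ind; under eq_bigr => i _ do rewrite one_sub_e2_expE.
rewrite bigA_distr_bigA /=; apply: eq_bigr => s _.
by rewrite /exp_coef /monomial -!big_split /=; apply: eq_bigr => i _; rewrite !ffunE.
Qed.

End IndicatorPolynomial.

Section Slicing.
Variables (F : finFieldType) (k n a b : nat).
Hypothesis cardF : #|F| = (3 ^ k)%N.
Hypothesis le_ba : (b <= a)%N.

Local Notation terms := {ffun 'I_n -> option {ffun 'I_k -> 'I_6}}.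
Local Notation V := {ffun 'I_n -> F}.
Local Notation L := (heavy k a b n).
Local Notation weight := (weight k a b).
Local Notation theta := (theta k a b).
Local Notation vec_weight := (@vec_weight k a b n).

Lemma term_weight_ge (t : option {ffun 'I_k -> 'I_6}) :
  (theta ^ 3 <= weight (term_exp t 0) * weight (term_exp t 1) * weight (term_exp t 2))%N.
Proof.
case: t => [pi|]; first exact: e2pow_weight_ge.
by rewrite /weight /= !expnS expn0 muln1 mulnA.
Qed.

Lemma exp_vec_weight_ge (s : terms) :
  (theta ^ (3 * n) <= vec_weight (exp_vec s 0) * vec_weight (exp_vec s 1)
                      * vec_weight (exp_vec s 2))%N.
Proof.
rewrite /vec_weight -!big_split /= expnM -[X in (_ ^ X)%N](card_ord n) -prod_nat_const.
by apply: leq_prod => i _; rewrite !ffunE; apply: term_weight_ge.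
Qed.

Definition slice_x al (y z : V) : F :=
  \sum_(s : terms | (exp_vec s 0 \in L) && (exp_vec s 0 == al))
    exp_coef F s * monomial (exp_vec s 1) y * monomial (exp_vec s 2) z.

Definition slice_y be (x z : V) : F :=
  \sum_(s : terms | (exp_vec s 0 \notin L) && (exp_vec s 1 \in L) && (exp_vec s 1 == be))
    exp_coef F s * monomial (exp_vec s 0) x * monomial (exp_vec s 2) z.

Definition slice_z ga (x y : V) : F :=
  \sum_(s : terms | (exp_vec s 0 \notin L) && (exp_vec s 1 \notin L) && (exp_vec s 2 == ga))
    exp_coef F s * monomial (exp_vec s 0) x * monomial (exp_vec s 1) y.

Lemma e2_zero_ind_slices x y z :
  e2_zero_ind k x y z =
  \sum_(al in L) monomial al x * slice_x al y z
  + \sum_(be in L) monomial be y * slice_y be x z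
  + \sum_(ga in L) monomial ga z * slice_z ga x y.
Proof.
rewrite (e2_zero_ind_expand cardF) (bigID (fun s => exp_vec s 0 \in L)) /= -addrA.
congr (_ + _).
  rewrite (partition_big (fun s : terms => exp_vec s 0) (mem L)) //=.
  apply: eq_bigr => al _; rewrite mulr_sumr; apply: eq_bigr => s /andP [_ /eqP <-].
  ring.
rewrite (bigID (fun s => exp_vec s 1 \in L)) /=; congr (_ + _).
  rewrite (partition_big (fun s : terms => exp_vec s 1) (mem L)) //=; last by move=> s /andP [].
  apply: eq_bigr => be _; rewrite mulr_sumr; apply: eq_bigr => s /andP [_ /eqP <-].
  ring.
rewrite (partition_big (fun s : terms => exp_vec s 2) (mem L)) //=; last first.
  by move=> s /andP [s0_light s1_light]; apply: heavy_third (exp_vec_weight_ge s) _ _.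
apply: eq_bigr => ga _; rewrite mulr_sumr; apply: eq_bigr => s /andP [_ /eqP <-].
ring.
Qed.

Lemma card_e2_free_le (A : {set V}) :
  (forall x y z, x \in A -> y \in A -> z \in A ->
     e2_zero_ind k x y z = if (x == y) && (y == z) then 1 else 0) ->
  (#|A| <= 3 * #|L|)%N.
Proof.
move=> e2_free; rewrite !mulSn mul0n addn0 addnA.
apply: (@slice_rank_diag_le F _ _ A L L L (@monomial F k n) (@monomial F k n) (@monomial F k n)
          slice_x slice_y slice_z).
by move=> x y z xA yA zA; rewrite -e2_free // e2_zero_ind_slices.
Qed.

End Slicing.

Lemma card_le_mul_fibers (T U : finType) (f : T -> U) (A : {set T}) (B : {set U}) m :
  {in A, forall x, f x \in B} -> (forall u, #|[set x in A | f x == u]| <= m)%N ->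
  (#|A| <= #|B| * m)%N.
Proof.
move=> fAB fib_le; rewrite -sum1_card (partition_big f (mem B)) //=.
rewrite -sum_nat_const; apply: leq_sum => u _; apply: leq_trans (fib_le u).
by rewrite -sum1_card; apply: eq_leq; apply: eq_bigl => x; rewrite inE.
Qed.

Lemma elem_sym3_2 (R : comPzRingType) (u : 'I_3 -> R) :
  elem_sym 2 u = u 0 * u 1 + u 1 * u 2 + u 2 * u 0.
Proof.
rewrite /elem_sym (reindex_onto (fun j : 'I_3 => ~: [set j])
                     (fun A => odflt ord0 [pick j in ~: A])); last first.
  move=> B /eqP cardB; have := cardsC B; rewrite card_ord cardB => cardBC.
  have /cards1P [x BCx] : #|~: B| == 1%N by apply/eqP; lia.
  case: pickP => [y|]; last by move/(_ x); rewrite BCx inE eqxx.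
  by rewrite BCx inE => /eqP -> /=; rewrite -BCx setCK.
rewrite (eq_bigl (fun _ => true)); last first.
  move=> j; rewrite cardsC1 card_ord eqxx /= setCK.
  by case: pickP => [y|]; [rewrite inE | move/(_ j); rewrite inE eqxx].
rewrite !big_ord_recl big_ord0 !(big_mkcond (fun i => i \in _)).
rewrite !big_ord_recl !big_ord0 /= !inE /=.
have -> : ord0 = 0 :> 'I_3 by apply/val_inj.
have -> : lift ord0 ord0 = 1 :> 'I_3 by apply/val_inj.
have -> : lift ord0 (lift ord0 ord0) = 2 :> 'I_3 by apply/val_inj.
ring.
Qed.

Lemma coordring_prodE (R : pzRingType) n (I : finType) (P : pred I) (g : I -> coordring R n) i :
  (\prod_(j | P j) g j : coordring R n) i = \prod_(j | P j) (g j : {ffun 'I_n -> R}) i.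
Proof.
elim/big_rec2: _ => [|j x y _ <-]; first by rewrite /GRing.one /= ffunE.
by rewrite /GRing.mul /= ffunE.
Qed.

Lemma elem_sym3_2_coordE (R : comPzRingType) n (g : 'I_3 -> coordring R n) i :
  (elem_sym 2 g : {ffun 'I_n -> R}) i =
  (g 0 : {ffun 'I_n -> R}) i * (g 1 : {ffun 'I_n -> R}) i
  + (g 1 : {ffun 'I_n -> R}) i * (g 2 : {ffun 'I_n -> R}) i
  + (g 2 : {ffun 'I_n -> R}) i * (g 0 : {ffun 'I_n -> R}) i.
Proof.
rewrite /elem_sym sum_ffunE; under eq_bigr do rewrite coordring_prodE.
exact: (elem_sym3_2 (fun j => (g j : {ffun 'I_n -> R}) i)).
Qed.

Lemma egz_witness (R : comPzRingType) n (S : seq (coordring R n)) (ix iy iz : 'I_(size S))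
    (x y z : {ffun 'I_n -> R}) :
    ix != iy -> iy != iz -> ix != iz ->
    nth 0 S ix = x -> nth 0 S iy = y -> nth 0 S iz = z ->
    (forall i, x i * y i + y i * z i + z i * x i = 0) ->
  exists pos : 'I_3 -> 'I_(size S), injective pos /\
    elem_sym 2 (fun j => nth 0 S (pos j)) = 0.
Proof.
move=> neq_xy neq_yz neq_xz Sx Sy Sz e2_0.
exists (fun j => nth ix [:: ix; iy; iz] j); split.
  move=> j1 j2 /eqP; rewrite nth_uniq ?ltn_ord //= => [/eqP /val_inj //|].
  by rewrite !inE negb_or neq_xy neq_xz neq_yz.
by apply/ffunP => i; rewrite elem_sym3_2_coordE /= Sx Sy Sz ffunE; apply: e2_0.
Qed.

Section SupportClasses.
Variables (F : finFieldType) (k n a b : nat).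
Hypothesis cardF : #|F| = (3 ^ k)%N.
Hypothesis k_gt0 : (0 < k)%N.
Hypothesis le_ba : (b <= a)%N.

Local Notation V := {ffun 'I_n -> F}.
Local Notation L := (heavy k a b n).

Lemma natr3F : 3%:R = 0 :> F.
Proof. exact: pcharf0 (pchar3F cardF). Qed.

Definition support (v : V) : {set 'I_n} := [set i | v i != 0].

Definition support_size (v : V) : 'I_n.+1 := inord #|support v|.

(* In characteristic 3, x^2 + 2xz = x(x - z), so z agrees with x on the support of x. *)
Lemma e2_xxz_eq (x z : V) : support_size x = support_size z ->
  (forall i, x i * x i + x i * z i + z i * x i = 0) -> x = z.
Proof.
move=> eq_size e2_0.
have agree i : x i != 0 -> z i = x i.
  move=> xi_neq0; move: (e2_0 i).
  rewrite (_ : _ + _ = x i * (x i - z i) + 3%:R * (x i * z i)); last by ring.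
  by rewrite natr3F mul0r addr0 => /eqP; rewrite mulf_eq0 (negbTE xi_neq0) subr_eq0 => /eqP.
have sub_supp : support x \subset support z.
  by apply/subsetP => i; rewrite !inE => xi_neq0; rewrite agree.
have card_lt (v : V) : (#|support v| < n.+1)%N by rewrite ltnS -[leqRHS]card_ord max_card.
have /subset_cardP/(_ sub_supp) eq_supp : #|support x| = #|support z|.
  by move/(congr1 val): eq_size; rewrite /= !inordK ?card_lt.
apply/ffunP => i; have [xi_eq0|/agree //] := eqVneq (x i) 0.
have : i \notin support x by rewrite inE xi_eq0 eqxx.
by rewrite eq_supp inE negbK xi_eq0 => /eqP.
Qed.

Lemma e2_solution_neq (x y z : V) :
    support_size x = support_size y -> support_size y = support_size z ->
    (forall i, x i * y i + y i * z i + z i * x i = 0) -> ~~ ((x == y) && (y == z)) ->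
  [/\ x != y, y != z & x != z].
Proof.
move=> sxy syz e2_0 not_const.
have neq_xy : x != y.
  apply: contraNneq not_const => eq_xy; rewrite -eq_xy eqxx; apply/eqP/e2_xxz_eq.
    by rewrite sxy.
  by move=> i; rewrite -[RHS](e2_0 i) eq_xy.
have neq_yz : y != z.
  apply: contraNneq not_const => eq_yz; rewrite eq_yz eqxx andbT; apply/eqP/esym/e2_xxz_eq.
    by rewrite -syz -sxy.
  by move=> i; rewrite -[RHS](e2_0 i) eq_yz; ring.
split => //; apply: contraNneq neq_xy => eq_xz; apply/eqP/e2_xxz_eq => // i.
by rewrite -[RHS](e2_0 i) eq_xz; ring.
Qed.

Lemma e2_solution_in_class (D : {set V}) :
    {in D &, forall x y, support_size x = support_size y} -> (3 * #|L| < #|D|)%N ->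
  exists x, exists y, exists z, [/\ [&& x \in D, y \in D & z \in D],
    [/\ x != y, y != z & x != z] & forall i, x i * y i + y i * z i + z i * x i = 0].
Proof.
move=> same_size card_D.
have [|no_sol] := boolP [exists x, exists y, exists z, [&& x \in D, y \in D, z \in D &
              ~~ ((x == y) && (y == z)) && [forall i, x i * y i + y i * z i + z i * x i == 0]]].
  case/existsP => x /existsP [y /existsP [z /and4P [xD yD zD /andP [not_const /forallP e2_0]]]].
  exists x, y, z; split; first by rewrite xD yD zD.
    apply: e2_solution_neq => [||i|] //; [exact: same_size | exact: same_size | exact/eqP].
  by move=> i; apply/eqP.
suff : (#|D| <= 3 * #|L|)%N by rewrite leqNgt card_D.
apply: (card_e2_free_le cardF le_ba) => x y z xD yD zD; rewrite (e2_zero_indE cardF k_gt0).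
have [/andP [/eqP <- /eqP <-]|not_const] := boolP ((x == y) && (y == z)).
  rewrite (_ : [forall i, _] = true) //; apply/forallP => i.
  rewrite (_ : x i * x i + x i * x i + x i * x i = 3%:R * (x i * x i)); last by ring.
  by rewrite natr3F mul0r.
case: forallP => // e2_0; case/negP: no_sol.
apply/existsP; exists x; apply/existsP; exists y; apply/existsP; exists z.
by rewrite xD yD zD not_const; apply/forallP.
Qed.

Lemma egz_witness_repeat (S : seq (coordring F n)) (v : V) :
    (3 <= #|[set i : 'I_(size S) | (nth 0%R S i : V) == v]|)%N ->
  exists pos : 'I_3 -> 'I_(size S), injective pos /\
    elem_sym 2 (fun j => nth 0 S (pos j)) = 0.
Proof.
move=> three_v; pose j (m : 'I_3) : 'I_(size S) := enum_val (widen_ord three_v m).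
have j_inj : injective j by move=> m1 m2 /enum_val_inj/(congr1 val) /= /val_inj.
have S_j m : nth 0 S (j m) = v.
  by have := enum_valP (widen_ord three_v m); rewrite inE => /eqP.
apply: (egz_witness (ix := j 0) (iy := j 1) (iz := j 2)) (S_j _) (S_j _) (S_j _) _;
  rewrite ?(inj_eq j_inj) // => i.
rewrite (_ : v i * v i + v i * v i + v i * v i = 3%:R * (v i * v i)); last by ring.
by rewrite natr3F mul0r.
Qed.

Lemma egz_prop_heavy : egz_prop (coordring F n) 3 2 (2 * (n.+1 * (3 * #|L|)) + 1).
Proof.
move=> S size_S; pose sv (i : 'I_(size S)) : V := nth 0 S i.
pose fib (v : V) := [set i | sv i == v].
have [/existsP [v /egz_witness_repeat //]|/existsPn fib_small] :=
  boolP [exists v, 3 <= #|fib v|]%N.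
pose D := [set sv i | i in [set: 'I_(size S)]].
have size_le : (size S <= #|D| * 2)%N.
  rewrite -{1}(card_ord (size S)) -cardsT; apply: card_le_mul_fibers => [i _|v].
    exact: imset_f.
  apply: leq_trans (_ : #|fib v| <= 2)%N; last by rewrite leqNgt fib_small.
  by apply: subset_leq_card; apply/subsetP => i; rewrite !inE.
pose Dw (w : 'I_n.+1) := [set v in D | support_size v == w].
have [w Dw_big] : exists w, (3 * #|L| < #|Dw w|)%N.
  apply/existsP; apply: contraT; rewrite negb_exists => /forallP Dw_small.
  have : (#|D| <= #|[set: 'I_n.+1]| * (3 * #|L|))%N.
    apply: (@card_le_mul_fibers _ _ support_size) => // w.
    by rewrite leqNgt Dw_small.
  by rewrite cardsT card_ord; lia.
have same_size : {in Dw w &, forall u v, support_size u = support_size v}.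
  by move=> u v; rewrite !inE => /andP [_ /eqP ->] /andP [_ /eqP ->].
have [x [y [z [/and3P [xDw yDw zDw] [neq_xy neq_yz neq_xz] e2_0]]]] :=
  e2_solution_in_class same_size Dw_big.
move: xDw yDw zDw; rewrite !inE => /andP [/imsetP [ix _ xE] _].
move=> /andP [/imsetP [iy _ yE] _] /andP [/imsetP [iz _ zE] _].
apply: (egz_witness _ _ _ (esym xE) (esym yE) (esym zE) e2_0).
- by apply: contraNneq neq_xy => eq_ixy; rewrite xE yE eq_ixy.
- by apply: contraNneq neq_yz => eq_iyz; rewrite yE zE eq_iyz.
- by apply: contraNneq neq_xz => eq_ixz; rewrite xE zE eq_ixz.
Qed.

End SupportClasses.

Section RealAsymptotics.
Local Open Scope R_scope.

Lemma INR_expn m n : INR (m ^ n)%N = INR m ^ n.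
Proof. by elim: n => [|n IH]; rewrite ?expn0 // expnS mult_INR IH. Qed.

Lemma cv_infty_sqrt_INR : cv_infty (fun n => sqrt (INR n)).
Proof.
move=> M; have [N MM_lt] := INR_unbounded (M * M); exists N => n le_Nn.
apply: Rle_lt_trans (Rle_abs M) _; rewrite -sqrt_Rsqr_abs.
apply: sqrt_lt_1_alt; split; first exact: Rle_0_sqr.
by rewrite /Rsqr; apply: Rlt_le_trans MM_lt (le_INR _ _ le_Nn).
Qed.

Lemma Un_cv_sqrt_div (K : R) : Un_cv (fun n => K * sqrt (INR n) / INR n) 0.
Proof.
apply: (Un_cv_ext (fun n => K * / sqrt (INR n))) => [n|].
  rewrite -{3}(sqrt_sqrt (INR n) (pos_INR n)).
  have [->|s_neq0] := Req_dec (sqrt (INR n)) 0; first by rewrite Rinv_0 !Rmult_0_r Rdiv_0_r.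
  by rewrite Rdiv_mult_r_r.
rewrite -(Rmult_0_r K); apply: (CV_mult (fun=> K) (fun n => / sqrt (INR n))).
  by move=> eps eps_gt0; exists 0%N => n _; rewrite R_dist_eq.
exact: cv_infty_cv_0 cv_infty_sqrt_INR.
Qed.

Lemma linear_le_exp_sqrt (x : R) : 1 <= x -> 6 * x + 7 <= exp (8 * sqrt x).
Proof.
move=> x_ge1; have s_ge0 := sqrt_pos x.
have ss : sqrt x * sqrt x = x by apply: sqrt_sqrt; lra.
have exp_ge := exp_ineq1_le (4 * sqrt x).
rewrite (_ : 8 * sqrt x = 4 * sqrt x + 4 * sqrt x); last by lra.
rewrite exp_plus; apply: Rle_trans (Rmult_le_compat _ _ _ _ _ _ exp_ge exp_ge); nra.
Qed.

End RealAsymptotics.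

Section Growth.
Local Open Scope R_scope.
Variables (k a b : nat) (c : R).
Hypothesis k_gt0 : (0 < k)%N.
Hypothesis b_gt0 : (0 < b)%N.
Hypothesis le_ba : (b <= a)%N.
Hypothesis c_gt1 : 1 < c.
Hypothesis weights_le :
  (INR a ^ 4 * INR b ^ 2) ^ k + (INR a ^ 6 + INR a ^ 3 * INR b ^ 3 + INR b ^ 6) ^ k <=
  c * (INR a ^ 4 * INR b ^ 2) ^ k + (INR b ^ 6) ^ k.

Lemma sum_weight_le : INR (\sum_(0 <= e < 3 ^ k) weight k a b e) <= c * INR (theta k a b).
Proof.
have := congr1 INR (sum_weight k a b).
rewrite /theta !(plus_INR, mult_INR, INR_expn) !pow_mult -(Rpow_mult_distr _ _ k); lra.
Qed.

Lemma card_heavy_le_pow n : INR #|heavy k a b n| <= c ^ n.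
Proof.
have theta_gt0 : 0 < INR (theta k a b).
  by apply/lt_0_INR/ltP; rewrite muln_gt0 !expn_gt0 b_gt0 (leq_trans b_gt0 le_ba).
have := le_INR _ _ (elimT leP (card_heavy_le k a b n)); rewrite mult_INR !INR_expn => card_le.
apply: (Rmult_le_reg_r (INR (theta k a b) ^ n)); first exact: pow_lt.
apply: Rle_trans card_le _; rewrite -Rpow_mult_distr; apply: pow_incr; split.
  exact: pos_INR.
exact: sum_weight_le.
Qed.

Lemma egz_growth (F : finFieldType) : #|F| = (3 ^ k)%N ->
  exists g : nat -> R,
    Un_cv (fun n => Rdiv (g n) (INR n)) R0 /\
    exists N : nat, forall n : nat, (N <= n)%N ->
      EGZ_le (coordring F n) 3 2 (Rpower c (Rplus (INR n) (g n))).
Proof.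
move=> cardF; have lnc_gt0 : 0 < ln c by rewrite -ln_1; apply: ln_increasing; lra.
(* c ^ g n = exp (8 sqrt n) absorbs the factor 6 n + 7 of the pigeonhole bound. *)
exists (fun n => 8 / ln c * sqrt (INR n)); split; first exact: Un_cv_sqrt_div.
exists 1%N => n n_ge1; set L := #|heavy k a b n|.
exists (2 * (n.+1 * (3 * L)) + 1)%N; split; first by rewrite addn1.
split; last exact: egz_prop_heavy.
have n_ge1R : 1 <= INR n by apply: (le_INR 1); apply/leP.
have cn_ge1 : 1 <= c ^ n by apply: pow_R1_Rle; lra.
have L_le : INR L <= c ^ n := card_heavy_le_pow n.
have L_ge0 := pos_INR L.
rewrite Rpower_plus Rpower_pow; last lra.
rewrite /Rpower (_ : 8 / ln c * sqrt (INR n) * ln c = 8 * sqrt (INR n)); last first.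
  by rewrite Rmult_comm -Rmult_assoc Rmult_div_assoc Rmult_div_r //; lra.
have lhs_le : INR (2 * (n.+1 * (3 * L)) + 1) <= (6 * INR n + 7) * c ^ n.
  rewrite plus_INR !mult_INR (S_INR n) /=; nra.
apply: Rle_trans lhs_le _; rewrite Rmult_comm; apply: Rmult_le_compat_l; first lra.
exact: linear_le_exp_sqrt.
Qed.

End Growth.

Theorem theorem4p13 :
  forall (k : nat), (2 <= k <= 5)%N ->
  forall (F : finFieldType), #|F| = (3 ^ k)%N ->
  exists g : nat -> R,
    Un_cv (fun n => Rdiv (g n) (INR n)) R0 /\
    exists N : nat, forall n : nat, (N <= n)%N ->
      EGZ_le (coordring F n) 3 2 (Rpower (egz_const k) (Rplus (INR n) (g n))).
Proof.
move=> k /andP [k_ge2 k_le5] F cardF.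
have : k = 2%N \/ k = 3%N \/ k = 4%N \/ k = 5%N by lia.
case=> [ek|[ek|[ek|ek]]]; subst k.
- by apply: (@egz_growth 2 8 7) => //; rewrite /egz_const ?INR_IZR_INZ /=; lra.
- by apply: (@egz_growth 3 13 11) => //; rewrite /egz_const ?INR_IZR_INZ /=; lra.
- by apply: (@egz_growth 4 19 16) => //; rewrite /egz_const ?INR_IZR_INZ /=; lra.
- by apply: (@egz_growth 5 13 11) => //; rewrite /egz_const ?INR_IZR_INZ /=; lra.
Qed.
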